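(* Let $M\ge2$ and let $L^{(1)},\dots,L^{(M)}$ be the $N^{(1)}\times N^{(1)}$ matrices of a hierarchical system as described in the context. Let $s_1,\dots,s_M$ be nonzero complex numbers and $L_s=\sum_{l=1}^M s_lL^{(l)}$. Then \[ \lambda(L_s)=\{0\}\cup\big(\lambda(s_1L^{(1)})\setminus\{0\}\big)\cup\cdots\cup\big(\lambda(s_ML^{(M)})\setminus\{0\}\big). \]
   Context: Hierarchical structure. Fix an integer $M\ge 2$ and positive integers $N^{(1)},\dots,N^{(M)}$; set $N^{(M+1)}:=1$. For each $l\in\{1,\dots,M\}$ the $N^{(l)}$ nodes of layer $l$ are partitioned into $N^{(l+1)}$ groups $G^{(l)}_1,\dots,G^{(l)}_{N^{(l+1)}}$ of sizes $k^{(l)}_p\ge1$ (so $\sum_pk^{(l)}_p=N^{(l)}$), numbered consecutively: group $G^{(l)}_p$ consists of nodes $\sum_{m<p}k^{(l)}_m+1,\dots,\sum_{m\le p}k^{(l)}_m$ of layer $l$. Each group $G^{(l)}_p$ carries a connected undirected graph with binary adjacency matrix; $L^{(l)}_p$ is its Laplacian (degree matrix minus adjacency matrix), and $L^{(l)}_D=\mathrm{diag}(L^{(l)}_1,\dots,L^{(l)}_{N^{(l+1)}})$ (block diagonal). Weights: positive constants $a_1,\dots,a_{N^{(1)}}$; $a^{(1)}_i=a_i$, $a^{(l+1)}_p=\sum_{i\in G^{(l)}_p}a^{(l)}_i$; $K^{(l)}=\mathrm{diag}(a^{(l)}_1,\dots,a^{(l)}_{N^{(l)}})^{-1}$. For $l=1,\dots,M-1$: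 $B^{(l)}=\mathrm{diag}(\mathbf{1}_{k^{(l)}_1},\dots,\mathbf{1}_{k^{(l)}_{N^{(l+1)}}})\in\mathbb{R}^{N^{(l)}\times N^{(l+1)}}$ ($\mathbf 1_k$ all-ones column vector), $C^{(l)}=\mathrm{diag}(C^{(l)}_1,\dots,C^{(l)}_{N^{(l+1)}})\in\mathbb{R}^{N^{(l+1)}\times N^{(l)}}$ with each $C^{(l)}_p\in\mathbb{R}^{1\times k^{(l)}_p}$ having nonnegative entries summing to $1$. $L^{(1)}=K^{(1)}L^{(1)}_D$ and $L^{(l)}=B^{(1)}\cdots B^{(l-1)}K^{(l)}L^{(l)}_DC^{(l-1)}\cdots C^{(1)}$ for $l=2,\dots,M$. $\lambda(A)$ is the set of eigenvalues of $A$. *)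

From HB Require Import structures.
From mathcomp Require Import all_boot all_order all_algebra.
Set Implicit Arguments. Unset Strict Implicit. Unset Printing Implicit Defensive.
Import Order.TTheory GRing.Theory Num.Theory.
Local Open Scope ring_scope.

(* Layers are numbered 1..M as in the paper; nodes and
   groups inside a layer are numbered from 0 (0-based version of the paper's
   consecutive numbering).
   - N l        : number of nodes of layer l (N (M+1) = 1)
   - k l p      : size of group p of layer l (p < N (l+1))
   - adj l      : adjacency relation of the (disjoint union of the) group
                  graphs of layer l, on nodes 'I_(N l)
   - c l i      : entry of C^(l) for node i of layer l
   - a i        : positive weights of the layer-1 nodes *)

Section Hier.
Variable R : numClosedFieldType.
Variable N : nat -> nat.
Variable k : nat -> nat -> nat.

Definition inG (l p i : nat) : bool :=
  ((\sum_(m < p) k l m <= i) && (i < \sum_(m < p.+1) k l m))%N.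

Definition laplacian (n : nat) (e : rel 'I_n) : 'M[R]_n :=
  \matrix_(i, j) ((i == j)%:R * (\sum_(m < n) (e i m)%:R) - (e i j)%:R).

(* aggregated weights: aw0 l = a^(l+1) *)
Fixpoint aw0 (a : nat -> R) (l : nat) (i : nat) : R :=
  match l with
  | 0 => a i
  | l'.+1 => \sum_(j < N l'.+1 | inG l'.+1 i j) aw0 a l' j
  end.
Definition aw (a : nat -> R) (l i : nat) : R := aw0 a l.-1 i.

Definition Kmat (a : nat -> R) (l : nat) : 'M[R]_(N l) :=
  invmx (diag_mx (\row_(i < N l) aw a l i)).

(* B^(l) : N^(l) x N^(l+1), block diag of all-ones columns *)
Definition Bmat (l : nat) : 'M[R]_(N l, N l.+1) :=
  \matrix_(i, p) (inG l p i)%:R.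

(* C^(l) : N^(l+1) x N^(l), block diag of the rows C^(l)_p *)
Definition Cmat (c : nat -> nat -> R) (l : nat) : 'M[R]_(N l.+1, N l) :=
  \matrix_(p, i) (if inG l p i then c l i else 0).

Fixpoint Bchain (l : nat) : 'M[R]_(N 1, N l.+1) :=
  match l with
  | 0 => 1%:M
  | l'.+1 => Bchain l' *m Bmat l'.+1
  end.

Fixpoint Cchain (c : nat -> nat -> R) (l : nat) : 'M[R]_(N l.+1, N 1) :=
  match l with
  | 0 => 1%:M
  | l'.+1 => Cmat c l'.+1 *m Cchain c l'
  end.

Definition LD (adj : forall l, rel 'I_(N l)) (l : nat) : 'M[R]_(N l) :=
  laplacian (adj l).

(* L^(1) = K^(1) L_D^(1);
   L^(l) = B^(1)..B^(l-1) K^(l) L_D^(l) C^(l-1)..C^(1)  for l >= 2 *)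
Definition Lmat (adj : forall l, rel 'I_(N l)) (c : nat -> nat -> R)
  (a : nat -> R) (l : nat) : 'M[R]_(N 1) :=
  match l with
  | 0 => 0
  | 1 => Kmat a 1 *m LD adj 1
  | l'.+2 => Bchain l'.+1 *m Kmat a l'.+2 *m LD adj l'.+2 *m Cchain c l'.+1
  end.

End Hier.

From HB Require Import structures.
From mathcomp Require Import all_boot all_order all_algebra.
Import Order.TTheory GRing.Theory Num.Theory.
Local Open Scope ring_scope.

(* For i < j the product L^(i) L^(j) contains C^(i-1)..C^(1) B^(1)..B^(i-1) = I
   followed by L_D^(i) B^(i), which vanishes because every column of B^(i) is
   constant along the edges of the group graphs; hence L^(i) L^(j) = 0.
   If A B = 0 and z <> 0, a left eigenvector v of A + B for z gives either
   v B = 0, and v is an eigenvector of A, or an eigenvector v B of B; conversely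
   left eigenvectors of A and right eigenvectors of B are eigenvectors of A + B.
   By induction the nonzero spectrum of L_s is the union of those of the s_l L^(l).
   Every L^(l) kills the all-ones vector, so 0 is an eigenvalue. *)

Section NonzeroSpectrum.

Variables (F : fieldType) (n : nat).
Implicit Types (A B : 'M[F]_n) (a : F).

Lemma eigenvalue_trmx A a : eigenvalue A^T a = eigenvalue A a.
Proof.
rewrite !eigenvalue_root_char /char_poly -det_tr; congr (root (\det _) a).
by apply/matrixP => i j; rewrite !mxE eq_sym.
Qed.

Lemma eigenvalue0_ker A (v : 'cV_n) : A *m v = 0 -> v != 0 -> eigenvalue A 0.
Proof.
move=> Av0 nz_v; rewrite -eigenvalue_trmx; apply/eigenvalueP; exists v^T.
  by rewrite -trmx_mul Av0 trmx0 scale0r.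
by rewrite -trmx0 (inj_eq trmx_inj).
Qed.

Lemma eigenvalue0 a : a != 0 -> eigenvalue (0 : 'M[F]_n) a = false.
Proof.
move=> nz_a; apply/eigenvalueP => -[v]; rewrite mulmx0 => /esym/eqP.
by rewrite scaler_eq0 (negbTE nz_a) => /eqP->; rewrite eqxx.
Qed.

Lemma eigenvalueDl A B a :
  A *m B = 0 -> a != 0 -> eigenvalue A a -> eigenvalue (A + B) a.
Proof.
move=> AB0 nz_a /eigenvalueP[w wA nz_w]; apply/eigenvalueP; exists w => //.
have wB0 : w *m B = 0.
  have : a *: (w *m B) = 0 by rewrite scalemxAl -wA -mulmxA AB0 mulmx0.
  by move/eqP; rewrite scaler_eq0 (negbTE nz_a) => /eqP.
by rewrite mulmxDr wB0 addr0.
Qed.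

Lemma eigenvalueD A B a : A *m B = 0 -> a != 0 ->
  eigenvalue (A + B) a = eigenvalue A a || eigenvalue B a.
Proof.
move=> AB0 nz_a; apply/idP/orP => [/eigenvalueP[v vAB nz_v] | [] ].
- have [vB0 | nz_vB] := eqVneq (v *m B) 0.
    by left; apply/eigenvalueP; exists v; rewrite // -vAB mulmxDr vB0 addr0.
  right; apply/eigenvalueP; exists (v *m B) => //.
  by rewrite scalemxAl -vAB mulmxDr mulmxDl -[v *m A *m B]mulmxA AB0 mulmx0 add0r.
- exact: eigenvalueDl.
- rewrite -eigenvalue_trmx -[eigenvalue (A + B) a]eigenvalue_trmx => eigB.
  rewrite [(A + B)^T]raddfD addrC /=; apply: eigenvalueDl eigB => //.
  by rewrite -trmx_mul AB0 trmx0.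
Qed.

Lemma eigenvalue_sum (r : seq 'M[F]_n) a :
  a != 0 -> pairwise (fun A B => A *m B == 0) r ->
  eigenvalue (\sum_(A <- r) A) a = has (fun A => eigenvalue A a) r.
Proof.
move=> nz_a; elim: r => [|A r IHr]; first by rewrite big_nil eigenvalue0.
rewrite pairwise_cons big_cons => /andP[/allP A_r pw_r] /=.
rewrite eigenvalueD ?IHr // mulmx_sumr big_seq big1 // => B /A_r.
exact: eqP.
Qed.

End NonzeroSpectrum.

Lemma pairwise_iota (e : rel nat) m n :
  (forall i j, (m <= i)%N -> (i < j)%N -> (j < m + n)%N -> e i j) ->
  pairwise e (iota m n).
Proof.
move=> He; have : pairwise ltn (iota m n).
  by rewrite -sorted_pairwise ?iota_ltn_sorted //; exact: ltn_trans.
apply: sub_in_pairwise (allss _) => i j.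
by rewrite !mem_iota => /andP[mi _] /andP[_ jn] ij; exact: He.
Qed.

Section Hierarchy.

Variables (R : numClosedFieldType) (N : nat -> nat) (k : nat -> nat -> nat).

Lemma laplacian_mul_eq0 n m (e : rel 'I_n) (X : 'M[R]_(n, m)) :
  (forall i j, e i j -> row i X = row j X) -> laplacian R e *m X = 0.
Proof.
move=> Xe; apply/matrixP => i q; rewrite !mxE.
under eq_bigr do rewrite !mxE mulrBl -mulrA.
rewrite sumrB; set deg := \sum_(m < n) (e i m)%:R.
have -> : \sum_j (i == j)%:R * (deg * X j q) = deg * X i q.
  rewrite (bigD1 i) //= eqxx mul1r [X in _ + X]big1 ?addr0 // => j /negbTE ji.
  by rewrite eq_sym ji mul0r.
apply/eqP; rewrite mulr_suml subr_eq0; apply/eqP/eq_bigr => j _.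
case: (boolP (e i j)) => [eij | _]; last by rewrite !mul0r.
by have /rowP/(_ q) := Xe _ _ eij; rewrite !mxE => ->.
Qed.

Lemma laplacian_mul_const n (e : rel 'I_n) :
  laplacian R e *m (const_mx 1 : 'cV_n) = 0.
Proof. by apply: laplacian_mul_eq0 => i j _; rewrite !row_const. Qed.

Lemma inG_uniq {l p q i} : inG k l p i -> inG k l q i -> p = q.
Proof.
have sum_mono u v : (u <= v)%N -> (\sum_(m < u) k l m <= \sum_(m < v) k l m)%N.
  move=> uv; rewrite -!(big_mkord xpredT).
  by rewrite (big_cat_nat (leq0n u) uv) leq_addr.
wlog pq : p q / (p <= q)%N => [wlog_pq | ].
  by case/orP: (leq_total p q) => ? Hp Hq; [|apply/esym]; apply: wlog_pq.
move=> /andP[_ ip] /andP[qi _]; apply/eqP; rewrite eqn_leq pq /= leqNgt.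
apply/negP => /sum_mono le_sums.
by have := leq_trans (leq_trans ip le_sums) qi; rewrite ltnn.
Qed.

Definition edges_within_groups (adj : forall l, rel 'I_(N l)) (l : nat) : Prop :=
  forall i j : 'I_(N l), adj l i j ->
    exists2 p, (p < N l.+1)%N & inG k l p i && inG k l p j.

Lemma LD_mulB adj l : edges_within_groups adj l -> LD R adj l *m Bmat R N k l = 0.
Proof.
move=> adj_in_group; apply: laplacian_mul_eq0 => i j.
move=> /adj_in_group[p _ /andP[ip jp]]; apply/rowP => q; rewrite !mxE.
suff -> : inG k l q j = inG k l q i by [].
by apply/idP/idP => [jq | iq];
  [rewrite -(inG_uniq jp jq) | rewrite -(inG_uniq ip iq)].
Qed.

Variable c : nat -> nat -> R.

Definition Cstochastic (l : nat) : Prop :=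
  forall p, (p < N l.+1)%N -> \sum_(i < N l | inG k l p i) c l i = 1.

Lemma Cmat_mulB l : Cstochastic l -> Cmat N k c l *m Bmat R N k l = 1%:M.
Proof.
move=> Cl; apply/matrixP => p q; rewrite !mxE.
under eq_bigr do rewrite !mxE.
have [<- | pq] := eqVneq p q.
  transitivity (\sum_(i < N l | inG k l p i) c l i); last by rewrite Cl.
  rewrite [RHS]big_mkcond; apply: eq_bigr => i _.
  by case: (inG k l p i); rewrite ?mulr1 ?mul0r.
rewrite big1 // => i _.
case ip: (inG k l p i); last by rewrite mul0r.
case iq: (inG k l q i); last by rewrite mulr0.
by rewrite (ord_inj (inG_uniq ip iq)) eqxx in pq.
Qed.

Lemma Cmat_mul_const l :
  Cstochastic l -> Cmat N k c l *m (const_mx 1 : 'cV_(N l)) = const_mx 1.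
Proof.
move=> Cl; apply/matrixP => p q; rewrite !mxE.
under eq_bigr do rewrite !mxE mulr1.
by rewrite -big_mkcond Cl.
Qed.

Lemma Cchain_mulB l :
  (forall l', (1 <= l' <= l)%N -> Cstochastic l') ->
  Cchain N k c l *m Bchain R N k l = 1%:M.
Proof.
elim: l => [|l IHl] Cst /=; first by rewrite mulmx1.
rewrite mulmxA -(mulmxA _ (Cchain N k c l)) IHl => [|l' /andP[l'1 l'l]].
  by rewrite mulmx1 Cmat_mulB //; apply: Cst; rewrite /= leqnn.
by apply: Cst; rewrite l'1 ltnW.
Qed.

Lemma Cchain_mul_const l :
  (forall l', (1 <= l' <= l)%N -> Cstochastic l') ->
  Cchain N k c l *m (const_mx 1 : 'cV_(N 1)) = const_mx 1.
Proof.
elim: l => [|l IHl] Cst /=; first by rewrite mul1mx.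
rewrite -mulmxA IHl => [|l' /andP[l'1 l'l]].
  by rewrite Cmat_mul_const //; apply: Cst; rewrite /= leqnn.
by apply: Cst; rewrite l'1 ltnW.
Qed.

Lemma Bchain_prefix {i j} : (i <= j)%N ->
  exists Y : 'M[R]_(N i.+1, N j.+1), Bchain R N k j = Bchain R N k i *m Y.
Proof.
elim: j => [|j IHj]; first by rewrite leqn0 => /eqP->; exists 1%:M; rewrite mulmx1.
rewrite leq_eqVlt => /predU1P[-> | /IHj[Y BY]]; first by exists 1%:M; rewrite mulmx1.
by exists (Y *m Bmat R N k j.+1); rewrite /= BY mulmxA.
Qed.

Variables (adj : forall l, rel 'I_(N l)) (a : nat -> R).

Lemma LmatS l : Lmat k adj c a l.+1 =
  Bchain R N k l *m Kmat N k a l.+1 *m LD R adj l.+1 *m Cchain N k c l.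
Proof. by case: l => [|l] //=; rewrite mul1mx mulmx1. Qed.

Lemma Lmat_mul_eq0 i j : (i < j)%N ->
  (forall l', (1 <= l' <= i)%N -> Cstochastic l') ->
  edges_within_groups adj i.+1 ->
  Lmat k adj c a i.+1 *m Lmat k adj c a j.+1 = 0.
Proof.
move=> ij Cst adj_in_group; rewrite !LmatS.
have [Y ->] := Bchain_prefix ij; rewrite /= !mulmxA.
rewrite -(mulmxA _ (Cchain N k c i)) Cchain_mulB // mulmx1.
by rewrite -(mulmxA _ (LD R adj i.+1)) LD_mulB // mulmx0 !mul0mx.
Qed.

Lemma Lmat_mul_const l :
  (forall l', (1 <= l' <= l)%N -> Cstochastic l') ->
  Lmat k adj c a l.+1 *m (const_mx 1 : 'cV_(N 1)) = 0.
Proof.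
move=> Cst; rewrite LmatS -!mulmxA Cchain_mul_const //.
by rewrite laplacian_mul_const !mulmx0.
Qed.

End Hierarchy.

Theorem corollary1 (R : numClosedFieldType) (M : nat) (N : nat -> nat)
  (k : nat -> nat -> nat) (adj : forall l, rel 'I_(N l))
  (c : nat -> nat -> R) (a : nat -> R) (s : nat -> R) :
  (2 <= M)%N ->
  (forall l, (1 <= l <= M)%N -> (0 < N l)%N) ->
  N M.+1 = 1%N ->
  (* group sizes: positive, and they partition the layer *)
  (forall l p, (1 <= l <= M)%N -> (p < N l.+1)%N -> (0 < k l p)%N) ->
  (forall l, (1 <= l <= M)%N -> \sum_(p < N l.+1) k l p = N l) ->
  (* each group carries an undirected graph (binary symmetric adjacency),
     edges only inside groups, and each group graph is connected *)
  (forall l, (1 <= l <= M)%N -> forall i j : 'I_(N l), adj l i j = adj l j i) ->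
  (forall l, (1 <= l <= M)%N -> forall i j : 'I_(N l), adj l i j ->
     exists2 p, (p < N l.+1)%N & inG k l p i && inG k l p j) ->
  (forall l, (1 <= l <= M)%N -> forall p (i j : 'I_(N l)), (p < N l.+1)%N ->
     inG k l p i -> inG k l p j -> connect (adj l) i j) ->
  (* positive weights *)
  (forall i, (i < N 1)%N -> 0 < a i) ->
  (* C^(l)_p : nonnegative entries summing to 1 *)
  (forall l, (1 <= l <= M.-1)%N -> forall i, (i < N l)%N -> 0 <= c l i) ->
  (forall l, (1 <= l <= M.-1)%N -> forall p, (p < N l.+1)%N ->
     \sum_(i < N l | inG k l p i) c l i = 1) ->
  (* nonzero complex coefficients *)
  (forall l, (1 <= l <= M)%N -> s l != 0) ->
  let L := Lmat k adj c a in
  let Ls := \sum_(1 <= l < M.+1) s l *: L l in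
  forall z : R,
    eigenvalue Ls z <->
    (z = 0 \/ exists2 l, (1 <= l <= M)%N & eigenvalue (s l *: L l) z && (z != 0)).
Proof.
move=> M2 N_gt0 _ _ _ _ adj_in_group _ _ _ Cst _ L Ls z.
have Cst_below l : (l < M)%N -> forall l', (1 <= l' <= l)%N -> Cstochastic R N k c l'.
  move=> lM l' /andP[l'1 l'l]; apply: Cst.
  by rewrite l'1 -ltnS (ltn_predK lM) (leq_ltn_trans l'l).
have [-> | nz_z] := eqVneq z 0.
  split=> [_ | _]; first by left.
  have N1_gt0 : (0 < N 1)%N := N_gt0 1 (ltnW M2).
  apply: (@eigenvalue0_ker _ _ _ (const_mx 1)).
    rewrite mulmx_suml big_nat big1 // => -[|l] // /andP[_ lM].
    by rewrite -scalemxAl /L Lmat_mul_const ?scaler0 //; exact: Cst_below.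
  by apply/eqP => /matrixP/(_ (Ordinal N1_gt0) 0)/eqP; rewrite !mxE oner_eq0.
have -> : Ls = \sum_(A <- [seq s l *: L l | l <- iota 1 M]) A.
  by rewrite big_map /Ls /index_iota subSS subn0.
rewrite eigenvalue_sum //; last first.
  rewrite pairwise_map; apply: pairwise_iota => -[|i] [|j] // _ ij jM /=.
  have iM : (i < M)%N := ltn_trans ij jM.
  rewrite -scalemxAl -scalemxAr Lmat_mul_eq0 ?scaler0 //; first exact: Cst_below.
  by apply: adj_in_group; rewrite /= iM.
rewrite has_map; split => [/hasP[l] | [z0 | [l l1M /andP[eig_l _]]]].
- by rewrite mem_iota add1n ltnS => l1M eig_l; right; exists l; rewrite /= ?andbT.
- by rewrite z0 eqxx in nz_z.
- by apply/hasP; exists l; rewrite // mem_iota add1n ltnS.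
Qed.
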